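(* Let $G$ be a finite group, let $\chi$ be an irreducible complex character of $G$, and write $\chi\otimes\bar\chi=a_1\chi_1+\cdots+a_q\chi_q$, where the $a_i$ are positive integers and the $\chi_i$ are irreducible characters of $G$ of dimensions $n_i=\chi_i(1)$, $i=1,\dots,q$. Then for every $g\in G$, $$c(g)\le\frac{(a_1/n_1^2)\chi_1(g)+\cdots+(a_q/n_q^2)\chi_q(g)}{a_1n_1+\cdots+a_qn_q},$$ and therefore $$c(G)\le\frac{a_1/n_1+\cdots+a_q/n_q}{a_1n_1+\cdots+a_qn_q}.$$
   Context: For $g\in G$, $c(g)=|\{(x,y)\in G\times G:[x,y]=g\}|/|G|^2$, and $c(G)=c(1)$. $\bar\chi$ denotes the complex conjugate character. *)

From HB Require Import structures.
From mathcomp Require Import all_boot all_order all_algebra all_fingroup all_solvable all_field all_character.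
Set Implicit Arguments. Unset Strict Implicit. Unset Printing Implicit Defensive.
Import Order.TTheory GRing.Theory Num.Theory.

Definition commut_prob_elt (gT : finGroupType) (G : {group gT}) (g : gT) : algC :=
  (#|[set xy in setX G G | ([~ xy.1, xy.2])%g == g]|%:R / (#|G| ^ 2)%:R)%R.

Definition commut_prob (gT : finGroupType) (G : {group gT}) : algC :=
  commut_prob_elt G 1%g.

From HB Require Import structures.
From mathcomp Require Import all_boot all_order all_algebra all_fingroup all_solvable all_field all_character.
From mathcomp Require Import ring.
Set Implicit Arguments. Unset Strict Implicit. Unset Printing Implicit Defensive.
Import Order.TTheory GRing.Theory Num.Theory.
Local Open Scope ring_scope.

(* Schur's lemma makes the class sums of G act as scalars in an irreducible
   representation, which yields Frobenius' formula
   sum_(x, y in G) chi_j([x, y] g) = |G|^2 chi_j(g) / n_j^2.  Apply it to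
   theta = chi * conj(chi) = sum_j a_j chi_j: since theta = |chi|^2 is
   nonnegative, the double sum of theta([x, y]^-1 g) is at least the
   contribution theta(1) = sum_j a_j n_j of each of the |G|^2 c(g) pairs with
   [x, y] = g. *)

Section CommutatorSums.

Variables (gT : finGroupType) (G : {group gT}).

Lemma cfun_mulgC (phi : 'CF(G)) u v : u \in G -> phi (u * v)%g = phi (v * u)%g.
Proof. by move=> Gu; rewrite -(cfunJ phi (u * v)%g Gu) conjgE -mulgA mulKg. Qed.

Lemma irr_sum_conjg_mul (i : Iirr G) u v : u \in G -> v \in G ->
  \sum_(y in G) 'chi_i (u * v ^ y)%g = #|G|%:R * 'chi_i u * 'chi_i v / 'chi_i 1%g.
Proof.
move=> Gu Gv; set rG := 'Chi_i.
have chiE x : x \in G -> 'chi_i x = \tr (rG x).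
  by move=> Gx; rewrite -irrRepr cfunE Gx mulr1n.
set K := \sum_(y in G) rG (v ^ y)%g.
have cK : centgmx rG K.
  apply/centgmxP => z Gz; rewrite mulmx_suml mulmx_sumr.
  rewrite [RHS](reindex_inj (mulIg z)) /=.
  apply: eq_big => [y|y Gy]; first by rewrite groupMr.
  rewrite -!repr_mxM ?groupJ ?groupM //; congr (rG _).
  by rewrite [LHS]conjgC -conjgM.
have [c defK] := is_scalar_mxP (mx_abs_irr_cent_scalar (groupC (socle_irr _)) cK).
have trK : \tr K = #|G|%:R * 'chi_i v.
  rewrite raddf_sum /= (eq_bigr (fun=> 'chi_i v)) => [|y Gy].
    by rewrite sumr_const mulr_natl.
  by rewrite -chiE ?groupJ ?cfunJ.
have {trK}cE : c = #|G|%:R * 'chi_i v / 'chi_i 1%g.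
  have chi1E : 'chi_i 1%g = (irr_degree (socle_of_Iirr i))%:R.
    by rewrite -irrRepr cfRepr1.
  rewrite -trK defK mxtrace_scalar chi1E -[c *+ _]mulr_natr mulfK //.
  by rewrite -chi1E irr1_neq0.
have -> : #|G|%:R * 'chi_i u * 'chi_i v / 'chi_i 1%g = c * 'chi_i u.
  by rewrite cE; ring.
rewrite (chiE u) // -mxtraceZ -mul_mx_scalar -defK mulmx_sumr raddf_sum.
apply: eq_bigr => y Gy.
by rewrite chiE ?groupM ?groupJ ?groupV // (repr_mxM rG Gu (groupJ Gv Gy)).
Qed.

Lemma irr_sum_commg_mul (i : Iirr G) g : g \in G ->
  \sum_(x in G) \sum_(y in G) 'chi_i ([~ x, y] * g)%g
    = #|G|%:R ^+ 2 * 'chi_i g / 'chi_i 1%g ^+ 2.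
Proof.
move=> Gg; have chi1_neq0 := irr1_neq0 i.
have orthoE : \sum_(x in G) 'chi_i (g * x^-1)%g * 'chi_i x
              = #|G|%:R * ('chi_i g / 'chi_i 1%g).
  have := generalized_orthogonality_relation g i i.
  rewrite eqxx mul1r => /(canRL (mulVKf (neq0CG G)))<-.
  rewrite (reindex_inj invg_inj); apply: eq_big => [x|x Gx]; first exact: groupV.
  by rewrite invgK cfun_mulgC ?groupV.
transitivity (\sum_(x in G) #|G|%:R * 'chi_i (g * x^-1)%g * 'chi_i x / 'chi_i 1%g).
  apply: eq_bigr => x Gx; rewrite -irr_sum_conjg_mul ?groupM ?groupV //.
  apply: eq_bigr => y Gy; rewrite commgEl [LHS]cfun_mulgC.
    by rewrite mulgA.
  by rewrite groupM ?groupV ?groupJ.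
transitivity (#|G|%:R / 'chi_i 1%g * \sum_(x in G) 'chi_i (g * x^-1)%g * 'chi_i x).
  by rewrite mulr_sumr; apply: eq_bigr => x _; field.
by rewrite orthoE; field.
Qed.

Lemma cfun_sum_commg_mul (phi : 'CF(G)) (c : Iirr G -> algC) g :
  phi = \sum_j c j *: 'chi_j -> g \in G ->
  \sum_(x in G) \sum_(y in G) phi ([~ x, y] * g)%g
    = #|G|%:R ^+ 2 * \sum_j c j / 'chi_j 1%g ^+ 2 * 'chi_j g.
Proof.
move=> -> Gg; rewrite mulr_sumr.
under eq_bigr do under eq_bigr do rewrite sum_cfunE.
under eq_bigr do rewrite exchange_big /=.
rewrite exchange_big /=; apply: eq_bigr => j _.
under eq_bigr do under eq_bigr do rewrite cfunE.
under eq_bigr do rewrite -mulr_sumr.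
rewrite -mulr_sumr irr_sum_commg_mul //; field.
exact: irr1_neq0.
Qed.

Lemma card_commg_eq_le (f : gT -> algC) g : (forall h, 0 <= f h) ->
  #|[set xy in setX G G | ([~ xy.1, xy.2])%g == g]|%:R * f 1%g
    <= \sum_(x in G) \sum_(y in G) f ([~ x, y]^-1 * g)%g.
Proof.
move=> f_ge0; rewrite pair_big /=.
rewrite (eq_bigl (mem (setX G G))) => [|xy]; last by rewrite /= inE.
rewrite (bigID (fun xy : gT * gT => [~ xy.1, xy.2] == g)%g) /=.
rewrite -[leLHS]addr0 lerD ?sumr_ge0 // (eq_bigr (fun=> f 1%g)) => [|xy].
  by rewrite sumr_const mulr_natl cardsE.
by case/andP=> _ /eqP->; rewrite mulVg.
Qed.

Lemma commut_prob_elt_mul_le (phi : 'CF(G)) (c : Iirr G -> algC) g :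
  phi = \sum_j c j *: 'chi_j -> (forall h, 0 <= phi h) -> g \in G ->
  commut_prob_elt G g * phi 1%g <= \sum_j c j / 'chi_j 1%g ^+ 2 * 'chi_j g.
Proof.
move=> phiE phi_ge0 Gg; have G2_gt0 : 0 < #|G|%:R ^+ 2 :> algC.
  by rewrite exprn_gt0 ?ltr0n ?cardG_gt0.
rewrite /commut_prob_elt natrX mulrAC ler_pdivrMr // [leRHS]mulrC.
rewrite -(cfun_sum_commg_mul phiE Gg).
apply: le_trans (card_commg_eq_le g phi_ge0) _.
rewrite exchange_big /=; under eq_bigr do under eq_bigr do rewrite invgR.
exact: lexx.
Qed.

End CommutatorSums.

Theorem corollary5 (gT : finGroupType) (G : {group gT}) (i : Iirr G)
    (a : Iirr G -> nat) :
  'chi_i * (('chi_i)^*)%CF = \sum_(j : Iirr G) (a j)%:R *: 'chi_j ->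
  (forall g : gT, g \in G ->
     commut_prob_elt G g <=
       (\sum_(j : Iirr G | (0 < a j)%N) (a j)%:R / ('chi_j 1%g) ^+ 2 * 'chi_j g)
       / (\sum_(j : Iirr G | (0 < a j)%N) (a j)%:R * 'chi_j 1%g))
  /\
  commut_prob G <=
    (\sum_(j : Iirr G | (0 < a j)%N) (a j)%:R / 'chi_j 1%g)
    / (\sum_(j : Iirr G | (0 < a j)%N) (a j)%:R * 'chi_j 1%g).
Proof.
move=> thetaE; set theta := _ * _ in thetaE.
have theta_ge0 h : 0 <= theta h by rewrite !cfunE -normCK exprn_ge0.
have theta1_gt0 : 0 < theta 1%g.
  by rewrite !cfunE -normCK exprn_gt0 ?normr_gt0 ?irr1_neq0.
have sum_aE (F : Iirr G -> algC) : (forall j, a j = 0%N -> F j = 0) ->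
    \sum_(j | (0 < a j)%N) F j = \sum_j F j.
  by move=> F0; apply: big_rmcond => j; rewrite lt0n negbK => /eqP/F0.
have -> : \sum_(j | (0 < a j)%N) (a j)%:R * 'chi_j 1%g = theta 1%g.
  rewrite sum_aE => [|j ->]; last by rewrite mul0r.
  by rewrite thetaE sum_cfunE; apply: eq_bigr => j _; rewrite cfunE.
have bound g : g \in G -> commut_prob_elt G g <=
    (\sum_(j | (0 < a j)%N) (a j)%:R / 'chi_j 1%g ^+ 2 * 'chi_j g) / theta 1%g.
  move=> Gg; rewrite ler_pdivlMr // sum_aE => [|j ->]; last by rewrite !mul0r.
  exact: commut_prob_elt_mul_le thetaE theta_ge0 Gg.
split=> //; rewrite /commut_prob.
rewrite (eq_bigr (fun j => (a j)%:R / 'chi_j 1%g ^+ 2 * 'chi_j 1%g)) => [|j _].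
  exact: bound.
by rewrite expr2 invfM mulrA mulfVK ?irr1_neq0.
Qed.
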